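(* Every pseudocompact space $X$ is $\sigma^*_{C(X)}$-$\alpha$-favorable.
   Context: A space is pseudocompact if it is Tychonoff and every real continuous function on it is bounded. $C(X)$ is the set of real continuous functions on $X$. The game $\mathcal J^*_{C(X)}$ on $X$: players $\beta$ and $\alpha$ alternately choose nonempty open sets $V_0\supseteq U_0\supseteq V_1\supseteq U_1\supseteq\cdots$ of $X$, $\beta$ choosing the $V_n$ (starting with $V_0$) and $\alpha$ the $U_n$. $\alpha$ wins the play iff for every sequence $(a_n)$ with $a_n\in U_n$ and every $g\in C(X)$ there is $t\in\bigcap_nU_n$ with $g(t)\in\overline{\{g(a_n):n\in\mathbb N\}}$. $X$ is $\sigma^*_{C(X)}$-$\alpha$-favorable if $\alpha$ has a winning strategy in this game. *)

From HB Require Import structures.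
From mathcomp Require Import all_boot all_order all_algebra.
From mathcomp Require Import all_classical all_reals all_analysis.
From mathcomp Require Import Rstruct Rstruct_topology.
From Stdlib Require Rdefinitions.
Set Implicit Arguments. Unset Strict Implicit. Unset Printing Implicit Defensive.
Import Order.TTheory GRing.Theory Num.Theory.
Local Open Scope classical_set_scope.
Local Open Scope ring_scope.

Definition tychonoff (X : topologicalType) : Prop :=
  accessible_space X /\ completely_regular_space X.

Definition pseudocompact (X : topologicalType) : Prop :=
  tychonoff X /\
  forall g : X -> Rdefinitions.R, continuous g -> exists M : Rdefinitions.R, forall x, `|g x| <= M.

(* A strategy for alpha: given beta's moves [:: V_0; ...; V_n] so far,
   it returns alpha's answer U_n. (alpha's own earlier moves are determined
   by the strategy, so this loses no generality.) *)
Definition alpha_strategy (X : topologicalType) := seq (set X) -> set X.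

Definition alpha_moves (X : topologicalType) (st : alpha_strategy X)
  (V : nat -> set X) (n : nat) : set X :=
  st [seq V k | k <- iota 0 n.+1].

Definition beta_legal_upto (X : topologicalType) (st : alpha_strategy X)
  (V : nat -> set X) (n : nat) : Prop :=
  (forall k, (k <= n)%N -> open (V k) /\ V k !=set0) /\
  (forall k, (k < n)%N -> V k.+1 `<=` alpha_moves st V k).

Definition alpha_strategy_legal (X : topologicalType) (st : alpha_strategy X) :=
  forall (V : nat -> set X) (n : nat), beta_legal_upto st V n ->
    open (alpha_moves st V n) /\ alpha_moves st V n !=set0 /\
    alpha_moves st V n `<=` V n.

Definition alpha_wins_play (X : topologicalType) (U : nat -> set X) : Prop :=
  forall (a : nat -> X), (forall n, U n (a n)) ->
  forall g : X -> Rdefinitions.R, continuous g ->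
  exists t : X, (\bigcap_n U n) t /\ closure (range (g \o a)) (g t).

Definition alpha_winning_strategy (X : topologicalType) (st : alpha_strategy X) :=
  alpha_strategy_legal st /\
  forall V : nat -> set X, (forall n, beta_legal_upto st V n) ->
    alpha_wins_play (alpha_moves st V).

Definition sigma_star_CX_alpha_favorable (X : topologicalType) : Prop :=
  exists st : alpha_strategy X, alpha_winning_strategy st.

From HB Require Import structures.
From mathcomp Require Import all_boot all_order all_algebra.
From mathcomp Require Import all_classical all_reals all_analysis.
From mathcomp Require Import Rstruct Rstruct_topology.
Set Implicit Arguments. Unset Strict Implicit. Unset Printing Implicit Defensive.
Import Order.TTheory GRing.Theory Num.Theory numFieldNormedType.Exports.
Local Open Scope classical_set_scope.
Local Open Scope ring_scope.

(* Player alpha answers each V_n with a nonempty open U_n whose closure lies in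
   V_n.  Given a play (a_n) and a continuous g, the open sets
   W_k = U_k /\ g^-1 (ball (g a_k) 1/(k+1)) have an accumulation point t: were the
   sequence (W_k) locally finite, choosing bumps h_k supported in W_k with
   h_k = 1 at some point of W_k, the locally finite sum of the k h_k would be an
   unbounded continuous function.  As the closures of the U_n are nested, t lies
   in every U_n, and g t is a limit point of the g a_k. *)

Lemma closure_shrink (X : topologicalType) (A : set X) :
  regular_space X -> open A -> A !=set0 ->
  exists U : set X, [/\ open U, U !=set0 & closure U `<=` A].
Proof.
move=> reg oA [x Ax].
have [C Cx CA] := reg x A (open_nbhs_nbhs (conj oA Ax)).
exists (interior C); split; first exact: open_interior.
  by exists x; apply: nbhs_singleton; apply: nbhs_interior.
by apply: subset_trans CA; apply: closureS; apply: interior_subset.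
Qed.

Lemma completely_regular_bump (R : realType) (X : topologicalType) (W : set X) x :
  completely_regular_space X -> open W -> W x ->
  exists f : X -> R,
    [/\ continuous f, forall y, 0 <= f y, f x = 1 & forall y, ~ W y -> f y = 0].
Proof.
move=> crs oW Wx.
have /(@uniform_separatorP X R) [f [fc fr f0 f1]] :=
  crs x (~` W) (open_closedC oW) (fun nWx => nWx Wx).
exists (fun y => 1 - f y); split.
- by move=> y; apply: (@continuousB R R^o X (fun=> 1) f y (cvg_cst _) (fc y)).
- move=> y; have : `[0, 1]%classic (f y) by apply: fr; exists y.
  by rewrite /= in_itv /= subr_ge0 => /andP[].
- by rewrite (f0 (f x)) ?subr0 //; exists x.
- by move=> y Wy; rewrite (f1 (f y)) ?subrr //; exists y.
Qed.

Section WeightedSeries.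
Variables (R : realType) (X : topologicalType) (h : nat -> X -> R).
Hypothesis h_ge0 : forall k y, 0 <= h k y.
Hypothesis h_cont : forall k, continuous (h k).

Definition weighted_psum (m : nat) (y : X) : R := \sum_(k < m) k%:R * h k y.

Lemma weighted_psumS m y : weighted_psum m.+1 y = weighted_psum m y + m%:R * h m y.
Proof. by rewrite /weighted_psum big_ord_recr. Qed.

Lemma weighted_psum_ge0 m y : 0 <= weighted_psum m y.
Proof. by apply: sumr_ge0 => k _; rewrite mulr_ge0. Qed.

Lemma le_weighted_psum m n y : (m <= n)%N -> weighted_psum m y <= weighted_psum n y.
Proof.
elim: n => [|n IH]; first by rewrite leqn0 => /eqP ->.
rewrite leq_eqVlt => /orP[/eqP -> //|lt_mn].
by rewrite weighted_psumS (le_trans (IH lt_mn)) // lerDl mulr_ge0.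
Qed.

Lemma weighted_psum_stable m n y : (m <= n)%N ->
  (forall k, (m <= k)%N -> h k y = 0) -> weighted_psum n y = weighted_psum m y.
Proof.
move=> le_mn h0; elim: n le_mn => [|n IH]; first by rewrite leqn0 => /eqP ->.
rewrite leq_eqVlt => /orP[/eqP -> //|lt_mn].
by rewrite weighted_psumS IH // h0 // mulr0 addr0.
Qed.

Lemma weighted_psum_continuous m : continuous (weighted_psum m).
Proof.
elim: m => [|m IH] x.
  by rewrite /weighted_psum; under eq_fun do rewrite big_ord0; exact: cvg_cst.
have -> : weighted_psum m.+1 = (fun y => weighted_psum m y + m%:R * h m y).
  by apply/funext => y; rewrite weighted_psumS.
apply: (@continuousD R R^o X _ (fun y => m%:R * h m y) x (IH x)).
exact: (@continuousM R X (fun=> m%:R) (h m) x (cvg_cst _) (@h_cont m x)).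
Qed.

Lemma weighted_series_continuous :
  (forall t : X, exists2 N, nbhs t N & exists m, forall k y, (m <= k)%N -> N y -> h k y = 0) ->
  exists g : X -> R, continuous g /\
    forall y m, (forall k, (m <= k)%N -> h k y = 0) -> g y = weighted_psum m y.
Proof.
move=> hloc.
(* Only finitely many terms are nonzero near each point, so the series is
   locally one of its partial sums. *)
have /choice[M HM] : forall y : X, exists m : nat, forall k, (m <= k)%N -> h k y = 0.
  move=> y.
  by have [N Ny [m Hm]] := hloc y; exists m => k mk; apply: Hm mk (nbhs_singleton Ny).
pose g y := weighted_psum (M y) y.
have gE y m : (forall k, (m <= k)%N -> h k y = 0) -> g y = weighted_psum m y.
  move=> hm; rewrite /g -(weighted_psum_stable (leq_maxl (M y) m) (HM y)).
  exact: weighted_psum_stable (leq_maxr _ _) hm.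
exists g; split=> [t|]; last exact: gE.
have [N Nt [m Hm]] := hloc t.
have near_g : {near t, weighted_psum m =1 g}.
  by apply: filterS Nt => z Nz; rewrite (gE z m) // => k mk; apply: Hm mk Nz.
rewrite /continuous_at (gE t m); last by move=> k mk; apply: Hm mk (nbhs_singleton Nt).
apply: cvg_trans (near_eq_cvg near_g) _; exact: weighted_psum_continuous.
Qed.

End WeightedSeries.

Definition accumulation_point (X : topologicalType) (W : nat -> set X) (t : X) :=
  forall N, nbhs t N -> forall m, exists2 k, (m <= k)%N & N `&` W k !=set0.

Lemma completely_regular_unbounded (R : realType) (X : topologicalType) (W : nat -> set X) :
  completely_regular_space X -> (forall k, open (W k)) -> (forall k, W k !=set0) ->
  (forall t, ~ accumulation_point W t) ->
  exists g : X -> R, continuous g /\ forall M, exists x, M < g x.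
Proof.
move=> crs oW nW noacc.
have Wloc (t : X) : exists2 N, nbhs t N & exists m, forall k y, (m <= k)%N -> N y -> ~ W k y.
  apply: contrapT => Hn; case: (noacc t) => N Nt m; apply: contrapT => Hk.
  by apply: Hn; exists N => //; exists m => k y mk Ny Wky; apply: Hk; exists k => //; exists y.
have [x xW] := choice nW.
have /choice[h hP] k : exists f : X -> R,
    [/\ continuous f, forall y, 0 <= f y, f (x k) = 1 & forall y, ~ W k y -> f y = 0].
  exact: completely_regular_bump.
have h_cont k : continuous (h k) by case: (hP k).
have h_ge0 k y : 0 <= h k y by case: (hP k).
have [g [g_cont gE]] : exists g : X -> R, continuous g /\
    forall y m, (forall k, (m <= k)%N -> h k y = 0) -> g y = weighted_psum h m y.
  apply: weighted_series_continuous => // t; have [N Nt [m Hm]] := Wloc t.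
  by exists N => //; exists m => k y mk Ny; case: (hP k) => _ _ _; apply; apply: Hm mk Ny.
exists g; split => // M; pose k := Num.bound `|M|; exists (x k).
have [N Nt [m Hm]] := Wloc (x k).
have hx0 j : (maxn m k.+1 <= j)%N -> h j (x k) = 0.
  move=> le_j; case: (hP j) => _ _ _; apply; apply: Hm (nbhs_singleton Nt).
  exact: leq_trans (leq_maxl _ _) le_j.
apply: le_lt_trans (ler_norm M) _; apply: lt_le_trans (archi_boundP (normr_ge0 M)) _.
rewrite (gE _ _ hx0); apply: le_trans (le_weighted_psum h_ge0 _ (leq_maxr m k.+1)).
by rewrite weighted_psumS; case: (hP k) => _ _ -> _; rewrite mulr1 lerDr weighted_psum_ge0.
Qed.

Lemma pseudocompact_accumulation (X : topologicalType) (W : nat -> set X) :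
  pseudocompact X -> (forall k, open (W k)) -> (forall k, W k !=set0) ->
  exists t, accumulation_point W t.
Proof.
move=> [[_ crs] bnd] oW nW; apply: contrapT => noacc.
have [g [g_cont g_unbnd]] := @completely_regular_unbounded Rdefinitions.R _ _ crs oW nW
  (fun t acc => noacc (ex_intro _ t acc)).
have [M HM] := bnd g g_cont; have [x Mx] := g_unbnd M.
by have := lt_le_trans Mx (le_trans (ler_norm _) (HM x)); rewrite ltxx.
Qed.

Lemma accumulation_point_bigcap (X : topologicalType) (U W : nat -> set X) t :
  (forall n, closure (U n.+1) `<=` U n) -> (forall k, W k `<=` U k) ->
  accumulation_point W t -> (\bigcap_n U n) t.
Proof.
move=> clU WU acc n _.
have decU m k : (m <= k)%N -> U k `<=` U m.
  elim: k => [|k IH]; first by rewrite leqn0 => /eqP ->.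
  rewrite leq_eqVlt => /orP[/eqP -> //|lt_mk].
  exact: subset_trans (subset_trans (@subset_closure _ _) (clU k)) (IH lt_mk).
apply: clU => N Nt.
have [k le_nk [y [Ny Wy]]] := acc N Nt n.+1.
by exists y; split => //; apply: decU le_nk _ (WU k y Wy).
Qed.

Lemma accumulation_point_closure_range (R : realType) (X : topologicalType)
    (Y : pseudoMetricType R) (g : X -> Y) (a : nat -> X) (W : nat -> set X) t :
  continuous g -> (forall k, W k `<=` g @^-1` ball (g (a k)) k.+1%:R^-1) ->
  accumulation_point W t -> closure (range (g \o a)) (g t).
Proof.
move=> g_cont Wball acc B /nbhs_ballP[e e_gt0 eB].
have e2_gt0 : 0 < e / 2 by apply: divr_gt0.
have [m _ Hm] := near_infty_natSinv_lt (PosNum e2_gt0).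
have Nt : nbhs t (g @^-1` ball (g t) (e / 2)) by apply: g_cont; apply: nbhsx_ballx.
have [k le_mk [y [gy Wy]]] := acc _ Nt m.
exists (g (a k)); split; first by exists k.
apply: eB; rewrite (splitr e); apply: ball_triangle gy _.
by apply: ball_sym; apply: le_ball (Wball k y Wy); apply: ltW; apply: Hm.
Qed.

Definition shrink_strategy (X : topologicalType) : alpha_strategy X := fun s =>
  if pselect (exists U, [/\ open U, U !=set0 & closure U `<=` last set0 s]) is left h
  then projT1 (cid h) else set0.

Lemma shrink_strategyP (X : topologicalType) (V : nat -> set X) n :
  regular_space X -> open (V n) -> V n !=set0 ->
  [/\ open (alpha_moves (@shrink_strategy X) V n), alpha_moves (@shrink_strategy X) V n !=set0
    & closure (alpha_moves (@shrink_strategy X) V n) `<=` V n].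
Proof.
move=> reg oV nV; rewrite /alpha_moves /shrink_strategy.
have -> : last set0 [seq V k | k <- iota 0 n.+1] = V n.
  by rewrite -addn1 iotaD map_cat last_cat.
case: pselect => [h|[]]; first exact: projT2 (cid h).
exact: closure_shrink.
Qed.

Lemma shrink_strategy_legal (X : topologicalType) :
  regular_space X -> alpha_strategy_legal (@shrink_strategy X).
Proof.
move=> reg V n [Vl _]; have [oV nV] := Vl n (leqnn n).
have [oU nU clU] := shrink_strategyP reg oV nV.
by split=> //; split=> //; apply: subset_trans clU; apply: subset_closure.
Qed.

Lemma shrink_play_closure (X : topologicalType) (V : nat -> set X) n :
  regular_space X -> (forall n, beta_legal_upto (@shrink_strategy X) V n) ->
  closure (alpha_moves (@shrink_strategy X) V n.+1) `<=` alpha_moves (@shrink_strategy X) V n.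
Proof.
move=> reg Vl; have [Vl1 Vl2] := Vl n.+1; have [oV nV] := Vl1 _ (leqnn _).
have [_ _ clU] := shrink_strategyP reg oV nV.
exact: subset_trans clU (Vl2 n (ltnSn n)).
Qed.

Theorem corollary5p2 (X : topologicalType) :
  pseudocompact X -> sigma_star_CX_alpha_favorable X.
Proof.
move=> pcX; have [[_ crs] _] := pcX.
have reg := @completely_regular_regular Rdefinitions.R X crs.
exists (@shrink_strategy X); split; first exact: shrink_strategy_legal.
move=> V Vl a aU g g_cont; set U := alpha_moves _ V.
pose W k := U k `&` g @^-1` ball (g (a k)) k.+1%:R^-1.
have oW k : open (W k).
  apply: openI; first by case: (shrink_strategy_legal reg (Vl k)).
  by apply: open_comp => [y _|]; [exact: g_cont | exact: (@ball_open _ Rdefinitions.R^o)].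
have nW k : W k !=set0 by exists (a k); split; [exact: aU | apply: ballxx].
have [t acc] := pseudocompact_accumulation pcX oW nW.
exists t; split.
- apply: accumulation_point_bigcap acc => [n|k]; last exact: subIsetl.
  exact: shrink_play_closure.
- by apply: accumulation_point_closure_range g_cont _ acc => k; exact: subIsetr.
Qed.
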